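(* Let $p$ be a prime and $k$ a positive integer. (1) If $p>2$, there are exactly two conjugacy classes of involutions in $\operatorname{Hol}(\mathbb{Z}/p^k\mathbb{Z})$, with representatives $\lambda(1,0)$ and $\lambda(-1,0)$. (2) There are exactly two conjugacy classes of involutions in $\operatorname{Hol}(\mathbb{Z}/2\mathbb{Z})$, with representatives $\lambda(1,0),\lambda(1,1)$. (3) There are exactly four conjugacy classes of involutions in $\operatorname{Hol}(\mathbb{Z}/4\mathbb{Z})$, with representatives $\lambda(1,0),\lambda(1,2),\lambda(-1,0),\lambda(-1,1)$. (4) For $k\ge3$ there are exactly six conjugacy classes of involutions in $\operatorname{Hol}(\mathbb{Z}/2^k\mathbb{Z})$, with representatives $\lambda(1,0),\lambda(1,2^{k-1}),\lambda(-1,0),\lambda(-1,1),\lambda(2^{k-1}-1,0),\lambda(2^{k-1}+1,0)$. Consequently, for every positive integer $m$, the number of conjugacy classes of involutions in $\operatorname{Hol}(\mathbb{Z}/m\mathbb{Z})$ is $\min(6,2\nu_2(m))\cdot2^{|\{p>2\text{ prime}:p\mid m\}|}$.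
   Context: $\operatorname{Hol}(\mathbb{Z}/m\mathbb{Z})$ is the group of permutations $\lambda(a,b):x\mapsto ax+b$ of $\mathbb{Z}/m\mathbb{Z}$ with $a$ a unit mod $m$ and $b\in\mathbb{Z}/m\mathbb{Z}$. An involution of a group is an element $g$ with $g^2=1$ (the identity counts as an involution). $\nu_2(m)$ is the exponent of $2$ in $m$. *)

From mathcomp Require Import all_boot all_fingroup.
Set Implicit Arguments. Unset Strict Implicit. Unset Printing Implicit Defensive.

Definition hol_fun (m a b : nat) (x : 'I_m) : 'I_m :=
  Ordinal (ltn_pmod (a * x + b) (leq_ltn_trans (leq0n x) (ltn_ord x))).
Arguments hol_fun : clear implicits.

(* lambda(a,b) as a permutation of Z/mZ (meaningful when a is a unit mod m;
   defaults to the identity if the map is not injective). *)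
Definition lam (m a b : nat) : {perm 'I_m} :=
  insubd (1%g : {perm 'I_m}) [ffun x : 'I_m => hol_fun m a b x].

Definition Hol (m : nat) : {set {perm 'I_m}} :=
  [set s | [exists a : 'I_m, exists b : 'I_m, coprime a m && (s == lam m a b)]].

(* Involutions of Hol(Z/mZ) (identity included). *)
Definition involutions (m : nat) : {set {perm 'I_m}} :=
  [set s in Hol m | (s ^+ 2 == 1)%g].

Definition inv_classes (m : nat) : {set {set {perm 'I_m}}} :=
  [set (s ^: Hol m)%g | s in involutions m].

Definition two_factor (v : nat) : nat := if v == 0 then 1 else minn 6 (2 * v).

From mathcomp Require Import all_boot all_fingroup zify ring.
Set Implicit Arguments. Unset Strict Implicit. Unset Printing Implicit Defensive.

(* Composition of affine maps reads lam a b * lam c d = lam (c a) (c b + d)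
   (lam_mul), and lam a b determines a, b mod m (lam_inj).  Consequently
   - lam a b is an involution iff a^2 = 1 and (a + 1) b = 0 mod m (lam_invol);
   - lam a' b' is conjugate to lam a b iff a' = a and a d + b' = c b + d mod m
     for some unit c and some d (lam_conj_intro, lam_conj_elim).
   Counting classes thus amounts to counting the classes of an explicit
   relation conj_rel on residue pairs (card_inv_classes).  Both conditions split
   along a coprime factorisation m = m1 m2 by the Chinese remainder theorem,
   so the number of classes is multiplicative (card_inv_classesM).
   For prime powers, the square roots of 1 are determined (sqrt1_odd_pk,
   sqrt1_8pow2), the remaining parameter b is normalised by conjugating with
   translations (lam_class_shift, reflection_class), and distinct
   representatives are separated by the invariant a (lam_class_neq_mult) and
   two parity-type arguments (lam_class_neq_transl, lam_class_neq_refl). *)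

Lemma modn_cancel_coprime m a x y :
  coprime a m -> a * x = a * y %[mod m] -> x = y %[mod m].
Proof.
move=> co; wlog le_yx : x y / y <= x.
  move=> W; case: (leqP y x) => [|/ltnW] le; first exact: W.
  by move=> e; symmetry; apply: W.
move/eqP; rewrite eqn_mod_dvd ?leq_mul2l ?le_yx ?orbT // -mulnBr.
by rewrite Gauss_dvdr 1?coprime_sym // -eqn_mod_dvd // => /eqP.
Qed.

Lemma modn_affine n x y z : (x * y + z) %% n = ((x %% n) * (y %% n) + z %% n) %% n.
Proof. by symmetry; rewrite modnDmr -modnDml modnMm modnDml. Qed.

Lemma eq_modn_mul n x y t : x = y + t * n -> x = y %[mod n].
Proof. by move->; rewrite addnC modnMDl. Qed.

Lemma eq_modn_witness n x y : x = y %[mod n] -> exists s t, x + s * n = y + t * n.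
Proof.
move=> e; exists (y %/ n), (x %/ n).
by rewrite {1}(divn_eq x n) {2}(divn_eq y n) e; lia.
Qed.

Lemma cards4 (T : finType) (x1 x2 x3 x4 : T) :
  (x2 == x1) = false -> (x3 == x1) = false -> (x3 == x2) = false ->
  (x4 == x1) = false -> (x4 == x2) = false -> (x4 == x3) = false ->
  #|[set x1; x2; x3; x4]| = 4.
Proof.
move=> n21 n31 n32 n41 n42 n43.
rewrite [in X in #|X|]setUC cardsU1 [in X in #|X|]setUC cardsU1 cardsU1 cards1.
by rewrite !inE ?n21 ?n31 ?n32 ?n41 ?n42 ?n43 // eq_sym n21.
Qed.

Lemma cards6 (T : finType) (x1 x2 x3 x4 x5 x6 : T) :
  (x2 == x1) = false -> (x3 == x1) = false -> (x3 == x2) = false ->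
  (x4 == x1) = false -> (x4 == x2) = false -> (x4 == x3) = false ->
  (x5 == x1) = false -> (x5 == x2) = false -> (x5 == x3) = false ->
  (x5 == x4) = false -> (x6 == x1) = false -> (x6 == x2) = false ->
  (x6 == x3) = false -> (x6 == x4) = false -> (x6 == x5) = false ->
  #|[set x1; x2; x3; x4; x5; x6]| = 6.
Proof.
move=> n21 n31 n32 n41 n42 n43 n51 n52 n53 n54 n61 n62 n63 n64 n65.
rewrite [in X in #|X|]setUC cardsU1 [in X in #|X|]setUC cardsU1.
rewrite [in X in #|X|]setUC cardsU1 [in X in #|X|]setUC cardsU1 cardsU1 cards1.
rewrite !inE ?n21 ?n31 ?n32 ?n41 ?n42 ?n43 ?n51 ?n52 ?n53 ?n54 ?n61 ?n62 ?n63 ?n64 ?n65.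
by rewrite eq_sym n21.
Qed.

Definition ord_mod m (m_gt0 : 0 < m) (x : nat) : 'I_m := Ordinal (ltn_pmod x m_gt0).

Lemma lamE m a b x : coprime a m -> nat_of_ord (lam m a b x) = (a * x + b) %% m.
Proof.
move=> co; rewrite -pvalE /lam insubdK ?ffunE //.
apply/injectiveP => y z; rewrite !ffunE => /(congr1 (@nat_of_ord m)) /eqP /=.
rewrite eqn_modDr => /eqP /(modn_cancel_coprime co).
by rewrite !modn_small // => /val_inj.
Qed.

Lemma lam_mod m a b : lam m a b = lam m (a %% m) (b %% m).
Proof.
rewrite /lam; congr insubd; apply/ffunP => x; rewrite !ffunE; apply/val_inj => /=.
by rewrite modnDmr; symmetry; rewrite -modnDml modnMml modnDml.
Qed.

(* Composition (left to right): lam a b * lam c d = lam (c a) (c b + d). *)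
Lemma lam_mul m a b c d : coprime a m -> coprime c m ->
  (lam m a b * lam m c d)%g = lam m (c * a) (c * b + d).
Proof.
move=> ca cc; apply/permP => x; apply/val_inj => /=.
rewrite permM lamE // lamE // lamE ?coprimeMl ?ca ?cc //.
by rewrite -modnDml modnMmr modnDml mulnDr mulnA addnA.
Qed.

Lemma lam1 m : lam m 1 0 = 1%g.
Proof.
apply/permP => x; apply/val_inj => /=.
by rewrite perm1 lamE ?coprime1n // mul1n addn0 modn_small.
Qed.

(* lam m a b determines a and b modulo m (evaluate at 0 and at 1). *)
Lemma lam_inj m a b c d : 0 < m -> coprime a m -> coprime c m ->
  lam m a b = lam m c d -> a = c %[mod m] /\ b = d %[mod m].
Proof.
move=> m_gt0 ca cc e; case: (ltngtP m 1) => [|m_gt1|->]; last by rewrite !modn1.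
  by rewrite ltnNge m_gt0.
have at0 := congr1 (fun s : {perm 'I_m} => val (s (Ordinal m_gt0))) e.
have at1 := congr1 (fun s : {perm 'I_m} => val (s (Ordinal m_gt1))) e.
move: at0 at1 => /=; rewrite !lamE //= !muln0 !muln1 !add0n => at0 at1.
split=> //; apply/eqP; rewrite -(eqn_modDr b); apply/eqP.
by rewrite -[in RHS]modnDmr at0 modnDmr -at1.
Qed.

Lemma lam_in_Hol m a b : 0 < m -> coprime a m -> lam m a b \in Hol m.
Proof.
move=> m_gt0 co; rewrite inE; apply/existsP; exists (ord_mod m_gt0 a).
apply/existsP; exists (ord_mod m_gt0 b).
by rewrite /= coprime_modl co -lam_mod eqxx.
Qed.

Lemma HolP m s : s \in Hol m -> exists a b : 'I_m, coprime a m /\ s = lam m a b.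
Proof.
by rewrite inE => /existsP [a /existsP [b /andP [co /eqP ->]]]; exists a, b.
Qed.

Lemma Hol_group_set m : 0 < m -> group_set (Hol m).
Proof.
move=> m_gt0; apply/group_setP; split; first by rewrite -lam1 lam_in_Hol ?coprime1n.
move=> x y /HolP [a [b [ca ->]]] /HolP [c [d [cc ->]]].
by rewrite lam_mul // lam_in_Hol // coprimeMl cc ca.
Qed.

(* Hol(Z/mZ) as a group (it is empty for m = 0). *)
Definition HolG m (m_gt0 : 0 < m) : {group {perm 'I_m}} := Group (Hol_group_set m_gt0).

(* lam a b is an involution iff a^2 = 1 and (a + 1) b = 0 modulo m. *)
Definition invol_cond m a b := (a * a == 1 %[mod m]) && (a * b + b == 0 %[mod m]).

(* lam a b conjugated by lam c d is lam a b' iff a d + b' = c b + d modulo m. *)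
Definition conj_cond m a b b' c d := a * d + b' == c * b + d %[mod m].

Lemma invol_cond_mod m a b : invol_cond m a b = invol_cond m (a %% m) (b %% m).
Proof. by rewrite /invol_cond modnMm -modn_affine modn_affine. Qed.

Lemma conj_cond_mod m a b b' c d :
  conj_cond m a b b' c d = conj_cond m (a %% m) (b %% m) (b' %% m) (c %% m) (d %% m).
Proof.
rewrite /conj_cond (modn_affine m a) (modn_affine m c).
by rewrite (modn_affine m (a %% m)) (modn_affine m (c %% m)) !modn_mod.
Qed.

Lemma invol_cond_crt m1 m2 a b : coprime m1 m2 ->
  invol_cond (m1 * m2) a b = invol_cond m1 a b && invol_cond m2 a b.
Proof. by move=> co; rewrite /invol_cond !chinese_remainder // andbACA. Qed.

Lemma conj_cond_crt m1 m2 a b b' c d : coprime m1 m2 ->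
  conj_cond (m1 * m2) a b b' c d = conj_cond m1 a b b' c d && conj_cond m2 a b b' c d.
Proof. by move=> co; rewrite /conj_cond chinese_remainder. Qed.

Lemma lam_invol m a b : 0 < m -> coprime a m ->
  ((lam m a b ^+ 2)%g == 1%g) = invol_cond m a b.
Proof.
move=> m_gt0 ca; rewrite expgS expg1 lam_mul // -lam1.
apply/eqP/andP => [e|[/eqP e1 /eqP e2]].
  have [] := lam_inj m_gt0 _ (coprime1n m) e; first by rewrite coprimeMl ca.
  by move=> -> ->.
by rewrite lam_mod e1 e2 -lam_mod.
Qed.

Lemma lam_conj_intro m a b b' c d : 0 < m -> coprime a m -> coprime c m ->
  a * d + b' = c * b + d %[mod m] -> lam m a b' \in (lam m a b ^: Hol m)%g.
Proof.
move=> m_gt0 ca cc e; apply/imsetP; exists (lam m c d); first exact: lam_in_Hol.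
apply: (mulgI (lam m c d)); rewrite conjgE mulKVg !lam_mul //.
by rewrite lam_mod [in RHS]lam_mod mulnC e.
Qed.

Lemma lam_conj_elim m a b a' b' : 0 < m -> coprime a m -> coprime a' m ->
  lam m a' b' \in (lam m a b ^: Hol m)%g ->
  a' = a %[mod m] /\ exists c d, coprime c m /\ a * d + b' = c * b + d %[mod m].
Proof.
move=> m_gt0 ca ca' /imsetP [y /HolP [c [d [cc ->]]]] e.
have := congr1 (fun z => lam m c d * z)%g e.
rewrite conjgE mulKVg !lam_mul // => /lam_inj [] //; try by rewrite coprimeMl ?ca ?ca' ?cc.
rewrite mulnC => /(modn_cancel_coprime cc) e1 e2; split=> //.
exists c, d; split=> //.
by rewrite -modnDml -modnMml -e1 modnMml modnDml.
Qed.

Lemma lam_class_eq m a b a' b' : 0 < m ->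
  lam m a' b' \in (lam m a b ^: Hol m)%g ->
  (lam m a' b' ^: Hol m)%g = (lam m a b ^: Hol m)%g.
Proof. by move=> m_gt0; apply: (@class_eqP _ (HolG m_gt0)). Qed.

(* Conjugating by a translation: the class of lam a b only depends on b modulo
   the image of x |-> (a - 1) x. *)
Lemma lam_class_shift m a b b' d : 0 < m -> 0 < a -> coprime a m ->
  a.-1 * d + b' = b %[mod m] -> (lam m a b' ^: Hol m)%g = (lam m a b ^: Hol m)%g.
Proof.
move=> m_gt0 a_gt0 ca e; apply/lam_class_eq/(lam_conj_intro (c := 1) (d := d)) => //.
  exact: coprime1n.
by rewrite mul1n -[a in a * d](prednK a_gt0) mulSn -addnA addnC -modnDml e modnDml.
Qed.

Lemma lam_class_in m a b : 0 < m -> coprime a m -> invol_cond m a b ->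
  (lam m a b ^: Hol m)%g \in inv_classes m.
Proof.
move=> m_gt0 ca q; apply/imsetP; exists (lam m a b) => //.
by rewrite inE lam_in_Hol // lam_invol.
Qed.

Lemma inv_classesP m C : 0 < m -> C \in inv_classes m ->
  exists a b : 'I_m, [/\ coprime a m, invol_cond m a b & C = (lam m a b ^: Hol m)%g].
Proof.
move=> m_gt0 /imsetP [x]; rewrite inE => /andP [/HolP [a [b [ca ->]]]].
by rewrite lam_invol // => q ->; exists a, b.
Qed.

Lemma lam_class_neq m a b a' b' : 0 < m -> coprime a m -> coprime a' m ->
  ~ (a' = a %[mod m] /\ exists c d, coprime c m /\ a * d + b' = c * b + d %[mod m]) ->
  ((lam m a b ^: Hol m)%g == (lam m a' b' ^: Hol m)%g) = false.
Proof.
move=> m_gt0 ca ca' N; apply/negbTE/eqP => e; apply: N.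
by apply: lam_conj_elim => //; rewrite e; exact: (class_refl (HolG m_gt0)).
Qed.

Lemma lam_class_neq_mult m a b a' b' : 0 < m -> coprime a m -> coprime a' m ->
  a < m -> a' < m -> a != a' ->
  ((lam m a b ^: Hol m)%g == (lam m a' b' ^: Hol m)%g) = false.
Proof.
move=> m_gt0 ca ca' am am' ne; apply: lam_class_neq => // -[+ _].
by rewrite !modn_small // => e; move: ne; rewrite e eqxx.
Qed.

Lemma lam_class_neq_transl m b : 0 < b < m ->
  ((lam m 1 0 ^: Hol m)%g == (lam m 1 b ^: Hol m)%g) = false.
Proof.
case/andP=> b_gt0 bm; apply: lam_class_neq; rewrite ?coprime1n //; first lia.
case=> _ [c [d [_]]]; rewrite mul1n muln0 add0n -[X in _ = X %[mod _]]addn0.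
by move/eqP; rewrite eqn_modDl mod0n modn_small //; lia.
Qed.

Lemma lam_class_neq_refl m : 0 < m -> ~~ odd m ->
  ((lam m m.-1 0 ^: Hol m)%g == (lam m m.-1 1 ^: Hol m)%g) = false.
Proof.
move=> m_gt0 m_even; have cm := coprimePn m_gt0.
have odd_pm : odd m.-1 by move: m_even; rewrite -[m in odd m](prednK m_gt0) /= negbK.
apply: lam_class_neq => // -[_ [c [d [_]]]]; rewrite muln0 add0n.
move/eq_modn_witness => [s [t /(congr1 odd)]].
by rewrite !oddD !oddM odd_pm (negbTE m_even) !andbF; case: (odd d).
Qed.

Definition invol_pairs m : {set 'I_m * 'I_m} :=
  [set p : 'I_m * 'I_m | coprime p.1 m && invol_cond m p.1 p.2].

(* q is related to p iff lam q is conjugate to lam p in Hol m. *)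
Definition conj_rel m : rel ('I_m * 'I_m) := fun p q =>
  (q.1 == p.1) &&
  [exists c : 'I_m, exists d : 'I_m, coprime c m && conj_cond m p.1 p.2 q.2 c d].
Arguments conj_rel : clear implicits.

(* The number of distinct E-neighbourhoods of points of A, i.e. the number of
   classes of E on A when E is an equivalence relation on A. *)
Definition nclasses (T : finType) (A : {set T}) (E : rel T) : nat :=
  #|[set [set y in A | E x y] | x in A]|.

Lemma conj_relP m (p q : 'I_m * 'I_m) : 0 < m -> coprime p.1 m -> coprime q.1 m ->
  (lam m q.1 q.2 \in (lam m p.1 p.2 ^: Hol m)%g) = conj_rel m p q.
Proof.
move=> m_gt0 cp cq; apply/idP/andP.
  case/lam_conj_elim => // e [c [d [cc e2]]].
  split; first by apply/eqP/val_inj; move: e; rewrite !modn_small.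
  apply/existsP; exists (ord_mod m_gt0 c); apply/existsP; exists (ord_mod m_gt0 d).
  by rewrite /= coprime_modl cc conj_cond_mod !modn_mod -conj_cond_mod; apply/eqP.
move=> [/eqP -> /existsP [c /existsP [d /andP [cc /eqP e]]]].
exact: lam_conj_intro e.
Qed.

Lemma conj_rel_refl m : 0 < m -> reflexive (conj_rel m).
Proof.
move=> m_gt0 [a b]; rewrite /conj_rel eqxx /=; apply/existsP.
exists (ord_mod m_gt0 1); apply/existsP; exists (ord_mod m_gt0 0).
rewrite /= coprime_modl coprime1n /= conj_cond_mod !modn_mod -conj_cond_mod.
by rewrite /conj_cond muln0 add0n mul1n addn0.
Qed.

Lemma imset_inj_in (T U : finType) (f : T -> U) (D A B : {set T}) :
  {in D &, injective f} -> A \subset D -> B \subset D -> f @: A = f @: B -> A = B.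
Proof.
move=> f_inj sAD sBD e; apply/setP => x; apply/idP/idP => h.
  have: f x \in f @: B by rewrite -e imset_f.
  by case/imsetP => y yB /f_inj -> //; [exact: (subsetP sAD) | exact: (subsetP sBD)].
have: f x \in f @: A by rewrite e imset_f.
by case/imsetP => y yA /f_inj -> //; [exact: (subsetP sBD) | exact: (subsetP sAD)].
Qed.

Definition lam_pair m (p : 'I_m * 'I_m) : {perm 'I_m} := lam m p.1 p.2.
Arguments lam_pair : clear implicits.

Lemma lam_pair_inj m : 0 < m -> {in invol_pairs m &, injective (lam_pair m)}.
Proof.
move=> m_gt0 [a b] [c d] /[!inE] /andP [ca _] /andP [cc _]; case/lam_inj => //.
by rewrite !modn_small // => e1 e2; congr pair; apply/val_inj.
Qed.

Lemma involutionsE m : 0 < m -> involutions m = lam_pair m @: invol_pairs m.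
Proof.
move=> m_gt0; apply/setP => s; rewrite inE; apply/andP/imsetP.
  case=> /HolP [a [b [ca ->]]]; rewrite lam_invol // => h.
  by exists (a, b) => //; rewrite inE /= ca.
case=> [[a b]]; rewrite inE /= => /andP [ca h] ->.
by rewrite lam_in_Hol // lam_invol.
Qed.

Lemma lam_pair_class m p : 0 < m -> p \in invol_pairs m ->
  (lam_pair m p ^: Hol m)%g = lam_pair m @: [set q in invol_pairs m | conj_rel m p q].
Proof.
have coP q : q \in invol_pairs m -> coprime q.1 m by rewrite inE => /andP [].
move=> m_gt0 pI; apply/setP => z; apply/idP/imsetP.
  move=> zc; have : z \in involutions m.
    have : lam_pair m p \in involutions m by rewrite involutionsE // imset_f.
    case/imsetP: zc => y yG ->; rewrite inE => /andP [LpH /eqP Lp2].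
    rewrite inE -conjXg Lp2 conj1g eqxx andbT.
    exact: (@groupJ _ (HolG m_gt0) _ _ LpH yG).
  rewrite involutionsE // => /imsetP [q qI zq]; exists q => //.
  by rewrite inE qI /= -conj_relP ?coP //; rewrite zq in zc.
case=> q; rewrite inE => /andP [qI e] ->.
by rewrite /lam_pair conj_relP ?coP.
Qed.

Lemma card_inv_classes m : 0 < m ->
  #|inv_classes m| = nclasses (invol_pairs m) (conj_rel m).
Proof.
move=> m_gt0; pose nbhd p := [set q in invol_pairs m | conj_rel m p q].
rewrite /inv_classes involutionsE // -imset_comp.
rewrite (eq_in_imset (g := fun p => lam_pair m @: nbhd p)); last first.
  by move=> p pI /=; rewrite lam_pair_class.
rewrite (imset_comp (fun A : {set _} => lam_pair m @: A) nbhd) card_in_imset //.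
move=> A B /imsetP [p _ ->] /imsetP [q _ ->].
apply: (imset_inj_in (lam_pair_inj m_gt0));
  by apply/subsetP => x; rewrite inE => /andP [].
Qed.

Lemma setX_inj (T1 T2 : finType) (A1 B1 : {set T1}) (A2 B2 : {set T2}) x1 x2 y1 y2 :
  x1 \in A1 -> x2 \in A2 -> y1 \in B1 -> y2 \in B2 ->
  setX A1 A2 = setX B1 B2 -> A1 = B1 /\ A2 = B2.
Proof.
move=> xA1 xA2 yB1 yB2 e; split; apply/setP => z; apply/idP/idP => h.
- by have := in_setX A1 A2 z x2; rewrite e h xA2 inE => /andP [].
- by have := in_setX B1 B2 z y2; rewrite -e h yB2 inE => /andP [].
- by have := in_setX A1 A2 x1 z; rewrite e h xA1 inE => /andP [].
- by have := in_setX B1 B2 y1 z; rewrite -e h yB1 inE => /andP [].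
Qed.

Section ProductCount.

Variables (T T1 T2 : finType) (A : {set T}) (A1 : {set T1}) (A2 : {set T2}).
Variables (E : rel T) (E1 : rel T1) (E2 : rel T2) (h : T -> T1 * T2).
Hypotheses (h_inj : {in A &, injective h}) (hA : h @: A = setX A1 A2).
Hypotheses (E1_refl : {in A1, forall x, E1 x x}) (E2_refl : {in A2, forall x, E2 x x}).
Hypothesis hE : {in A &, forall x y, E x y = E1 (h x).1 (h y).1 && E2 (h x).2 (h y).2}.

Let C1 x := [set y in A1 | E1 x y].
Let C2 x := [set y in A2 | E2 x y].

Lemma nbhd_image x : x \in A ->
  h @: [set y in A | E x y] = setX (C1 (h x).1) (C2 (h x).2).
Proof.
move=> xA; apply/setP => u; apply/imsetP/idP.
  case=> y /[!inE] /andP [yA exy] ->.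
  have : h y \in setX A1 A2 by rewrite -hA imset_f.
  by rewrite !inE => /andP [-> ->] /=; rewrite -hE.
rewrite !inE => /andP [/andP [u1 e1] /andP [u2 e2]].
have : u \in setX A1 A2 by rewrite inE u1 u2.
rewrite -hA => /imsetP [y yA uy]; exists y => //.
by rewrite inE yA hE // -uy e1 e2.
Qed.

Lemma nclasses_prod : nclasses A E = nclasses A1 E1 * nclasses A2 E2.
Proof.
rewrite /nclasses -(card_in_imset (f := fun S : {set T} => h @: S)); last first.
  move=> S S' /imsetP [x _ ->] /imsetP [y _ ->].
  by apply: imset_inj_in h_inj _ _; apply/subsetP => z; rewrite inE => /andP [].
rewrite -imset_comp (eq_in_imset (g := fun x => setX (C1 (h x).1) (C2 (h x).2)));
  last exact: nbhd_image.
rewrite (imset_comp (fun u => setX (C1 u.1) (C2 u.2)) h) hA.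
rewrite (imset_comp (fun S => setX S.1 S.2) (fun u => (C1 u.1, C2 u.2))).
have -> : [set (C1 u.1, C2 u.2) | u in setX A1 A2] = setX (C1 @: A1) (C2 @: A2).
  apply/setP => -[S1 S2]; apply/imsetP/idP.
    by case=> -[u1 u2] /[!inE] /andP [u1A u2A] [-> ->]; rewrite /= !imset_f.
  rewrite inE /= => /andP [/imsetP [u1 u1A ->] /imsetP [u2 u2A ->]].
  by exists (u1, u2) => //; rewrite inE u1A u2A.
rewrite card_in_imset ?cardsX // => -[S1 S2] [S1' S2'] /[!inE] /=.
case/andP=> /imsetP [u1 u1A ->] /imsetP [u2 u2A ->].
case/andP=> /imsetP [v1 v1A ->] /imsetP [v2 v2A ->] e.
have [] := setX_inj (x1 := u1) (x2 := u2) (y1 := v1) (y2 := v2) _ _ _ _ e;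
  by [rewrite inE ?u1A ?u2A ?v1A ?v2A ?E1_refl ?E2_refl | move=> -> ->].
Qed.

End ProductCount.

Section CoprimeSplitting.

Variables m1 m2 : nat.
Hypotheses (m1_gt0 : 0 < m1) (m2_gt0 : 0 < m2) (co12 : coprime m1 m2).

Let m_gt0 : 0 < m1 * m2. Proof. by rewrite muln_gt0 m1_gt0. Qed.

Let modn_mull x : x %% (m1 * m2) %% m1 = x %% m1.
Proof. by rewrite modn_dvdm // dvdn_mulr. Qed.

Let modn_mulr x : x %% (m1 * m2) %% m2 = x %% m2.
Proof. by rewrite modn_dvdm // dvdn_mull. Qed.

Let eq_crt (x y : 'I_(m1 * m2)) : (x == y) = (x %% m1 == y %% m1) && (x %% m2 == y %% m2).
Proof. by rewrite -chinese_remainder // !modn_small. Qed.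

Let crt x1 x2 : 'I_(m1 * m2) := ord_mod m_gt0 (chinese m1 m2 x1 x2).

Let crt_modl x1 x2 : chinese m1 m2 x1 x2 %% (m1 * m2) %% m1 = x1 %% m1.
Proof. by rewrite modn_mull chinese_modl. Qed.

Let crt_modr x1 x2 : chinese m1 m2 x1 x2 %% (m1 * m2) %% m2 = x2 %% m2.
Proof. by rewrite modn_mulr chinese_modr. Qed.

Definition crt_split (p : 'I_(m1 * m2) * 'I_(m1 * m2)) :=
  ((ord_mod m1_gt0 p.1, ord_mod m1_gt0 p.2), (ord_mod m2_gt0 p.1, ord_mod m2_gt0 p.2)).

Lemma crt_split_inj : injective crt_split.
Proof.
move=> [a b] [c d] [ac bd ac' bd'].
by congr pair; apply/eqP; rewrite eq_crt ?ac ?bd ?ac' ?bd' !eqxx.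
Qed.

Lemma crt_split_invol :
  crt_split @: invol_pairs (m1 * m2) = setX (invol_pairs m1) (invol_pairs m2).
Proof.
apply/setP => -[u1 u2]; apply/imsetP/idP.
  case=> -[a b] + ->; rewrite !inE /= => /andP [ca qa].
  rewrite !coprime_modl -invol_cond_mod -(invol_cond_mod m2).
  by move: ca qa; rewrite coprimeMr invol_cond_crt // => /andP [-> ->] /andP [-> ->].
rewrite !inE => /andP [/andP [c1 q1] /andP [c2 q2]].
exists (crt u1.1 u2.1, crt u1.2 u2.2).
  rewrite inE /= coprimeMr invol_cond_crt //.
  rewrite -(coprime_modl _ m1) -(coprime_modl _ m2) invol_cond_mod (invol_cond_mod m2).
  rewrite !crt_modl !crt_modr !coprime_modl -invol_cond_mod -(invol_cond_mod m2).
  by rewrite c1 c2 q1 q2.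
case: u1 u2 {c1 q1 c2 q2} => [x1 y1] [x2 y2].
congr (pair (pair _ _) (pair _ _)); apply/val_inj.
all: by rewrite /= ?crt_modl ?crt_modr modn_small.
Qed.

Lemma crt_split_conj (p q : 'I_(m1 * m2) * 'I_(m1 * m2)) :
  conj_rel (m1 * m2) p q =
  conj_rel m1 (crt_split p).1 (crt_split q).1 && conj_rel m2 (crt_split p).2 (crt_split q).2.
Proof.
rewrite /conj_rel /= andbACA; congr andb; first by rewrite eq_crt -!val_eqE.
apply/existsP/andP.
  case=> c /existsP [d /andP [cc]]; rewrite conj_cond_crt // => /andP [e1 e2].
  move: cc; rewrite coprimeMr => /andP [cc1 cc2]; split.
    apply/existsP; exists (ord_mod m1_gt0 c); apply/existsP; exists (ord_mod m1_gt0 d).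
    by rewrite /= coprime_modl cc1 -conj_cond_mod.
  apply/existsP; exists (ord_mod m2_gt0 c); apply/existsP; exists (ord_mod m2_gt0 d).
  by rewrite /= coprime_modl cc2 -conj_cond_mod.
case=> /existsP [c1 /existsP [d1 /andP [cc1 e1]]] /existsP [c2 /existsP [d2 /andP [cc2 e2]]].
exists (crt c1 c2); apply/existsP; exists (crt d1 d2).
rewrite coprimeMr conj_cond_crt // -(coprime_modl _ m1) -(coprime_modl _ m2) /=.
rewrite conj_cond_mod (conj_cond_mod m2) !crt_modl !crt_modr !coprime_modl cc1 cc2.
rewrite conj_cond_mod !modn_mod in e1; rewrite conj_cond_mod !modn_mod in e2.
by rewrite e1 e2.
Qed.

End CoprimeSplitting.

Lemma card_inv_classesM m1 m2 : 0 < m1 -> 0 < m2 -> coprime m1 m2 ->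
  #|inv_classes (m1 * m2)| = #|inv_classes m1| * #|inv_classes m2|.
Proof.
move=> m1_gt0 m2_gt0 co12; rewrite !card_inv_classes ?muln_gt0 ?m1_gt0 //.
apply: (nclasses_prod (h := crt_split m1_gt0 m2_gt0)).
- by move=> p q _ _; apply: crt_split_inj.
- exact: crt_split_invol.
- by move=> x _; apply: conj_rel_refl.
- by move=> x _; apply: conj_rel_refl.
- by move=> p q _ _; apply: crt_split_conj.
Qed.

Lemma invol_cond_witness t u m a b :
  a * a = 1 + t * m -> a * b + b = u * m -> invol_cond m a b.
Proof.
by move=> e1 e2; apply/andP; split; apply/eqP/eq_modn_mul; rewrite ?e1 ?e2.
Qed.

Lemma reflection_class m b : 1 < m ->
  (lam m m.-1 b ^: Hol m)%g = (lam m m.-1 (odd b) ^: Hol m)%g.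
Proof.
move=> m_gt1; have := odd_double_half b; rewrite -muln2 => Eb.
apply: (lam_class_shift (d := b./2)); rewrite ?coprimePn //; try lia.
by apply: (eq_modn_mul (t := b./2)); rewrite -{1}Eb; nia.
Qed.

Lemma reflection_class_odd m b : 1 < m -> odd m ->
  (lam m m.-1 b ^: Hol m)%g = (lam m m.-1 0 ^: Hol m)%g.
Proof.
move=> m_gt1 m_odd; rewrite reflection_class //; case: (odd b) => //=.
by rewrite lam_mod -(modnDr 1 m) -lam_mod reflection_class // oddD m_odd.
Qed.

Lemma sqrt1_odd_pk p k a : prime p -> 2 < p -> 0 < k -> a < p ^ k ->
  a * a = 1 %[mod p ^ k] -> a = 1 \/ a = (p ^ k).-1.
Proof.
move=> p_pr p_gt2 k_gt0.
have pk_gt1 : 1 < p ^ k by rewrite -(exp1n k) ltn_exp2r // prime_gt1.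
have cop x : coprime (p ^ k) x = ~~ (p %| x) by rewrite coprime_pexpl // prime_coprime.
move: (p ^ k) pk_gt1 cop => m m_gt1 cop a_lt sq.
have a_gt0 : 0 < a by case: a sq {a_lt} => // /eqP; rewrite mod0n eq_sym modn_small.
have dvd_m : m %| a.-1 * a.+1.
  have -> : a.-1 * a.+1 = a * a - 1 by nia.
  by rewrite -eqn_mod_dvd ?muln_gt0 ?a_gt0 //; apply/eqP.
case: (boolP (p %| a.-1)) => [p_a1 | p_a1]; [left | right].
  have p_a2 : ~~ (p %| a.+1).
    apply/negP => p_a2; have := dvdn_sub p_a2 p_a1.
    by rewrite (_ : a.+1 - a.-1 = 2); [move/dvdn_leq => /(_ isT); lia | lia].
  case: (posnP a.-1) => [|pos]; first lia.
  by move: dvd_m; rewrite Gauss_dvdl ?cop // => /(dvdn_leq pos); lia.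
by move: dvd_m; rewrite Gauss_dvdr ?cop // => /(dvdn_leq (ltn0Sn a)); lia.
Qed.

Lemma inv_classes_odd_pk p k : prime p -> 2 < p -> 0 < k ->
  inv_classes (p ^ k) =
    [set (lam (p ^ k) 1 0 ^: Hol (p ^ k))%g; (lam (p ^ k) (p ^ k).-1 0 ^: Hol (p ^ k))%g]
  /\ #|inv_classes (p ^ k)| = 2.
Proof.
move=> p_pr p_gt2 k_gt0; have sqrt1 := sqrt1_odd_pk p_pr p_gt2 k_gt0.
have m_odd : odd (p ^ k).
  by rewrite oddX; case: (even_prime p_pr) => [p2|->]; [lia | rewrite orbT].
have m_gt2 : 2 < p ^ k by apply: leq_trans p_gt2 _; rewrite -{1}(expn1 p) leq_exp2l ?prime_gt1.
move: (p ^ k) m_odd m_gt2 sqrt1 => m m_odd m_gt2 sqrt1; have m_gt0 : 0 < m by lia.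
have inv_refl : invol_cond m m.-1 0.
  by apply: (invol_cond_witness (t := m - 2) (u := 0)); nia.
have -> : inv_classes m = [set (lam m 1 0 ^: Hol m)%g; (lam m m.-1 0 ^: Hol m)%g].
  apply/setP => C; rewrite !inE; apply/idP/idP; last first.
    case/orP => /eqP ->; apply: lam_class_in; rewrite ?coprime1n ?coprimePn //.
    by rewrite /invol_cond !eqxx.
  case/(inv_classesP m_gt0) => a [b [ca /andP [sq b_cond] ->]].
  case: (sqrt1 a (ltn_ord a) (eqP sq)) b_cond => -> b_cond.
    have : 2 * b = 2 * 0 %[mod m].
      by rewrite muln0 mul2n -addnn -{1}(mul1n b); apply/eqP.
    move/modn_cancel_coprime; rewrite coprime2n mod0n modn_small // => /(_ m_odd) ->.
    by rewrite eqxx.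
  by rewrite reflection_class_odd ?eqxx ?orbT //; lia.
by rewrite cards2 lam_class_neq_mult ?coprime1n ?coprimePn //; lia.
Qed.

(* Powers of two 2^k, k >= 3, written m = 8 r with r = 2^(k-3). *)
Section TwoPowers.

Variable s : nat.
Local Notation r := (2 ^ s).
Local Notation m := (8 * 2 ^ s).
Local Notation cls a b := (lam m a b ^: Hol m)%g.

Let r_gt0 : 0 < r. Proof. by rewrite expn_gt0. Qed.

Let m_gt0 : 0 < m. Proof. by rewrite muln_gt0 r_gt0. Qed.

Let coprime_2pow e x : coprime (2 ^ e.+1 * r) x = odd x.
Proof. by rewrite -expnD coprime_pexpl // coprime2n. Qed.

Let coprime_m x : coprime x m = odd x.
Proof. by rewrite coprime_sym (coprime_2pow 2). Qed.

Let unit_m1 : coprime m.-1 m. Proof. exact: coprimePn. Qed.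

Let unit_h1 : coprime (4 * r).-1 m.
Proof. by rewrite coprime_m (_ : (4 * r).-1 = (2 * (2 * r).-1).+1) /= ?oddM //; lia. Qed.

Let unit_h2 : coprime (4 * r).+1 m. Proof. by rewrite coprime_m /= oddM. Qed.

Lemma sqrt1_8pow2 a : a < m -> a * a = 1 %[mod m] ->
  [\/ a = 1, a = (4 * r).-1, a = (4 * r).+1 | a = m.-1].
Proof.
move=> a_lt sq; have a_odd : odd a.
  move/(congr1 (modn^~ 2)): sq; rewrite !modn_dvdm ?dvdn_mulr //.
  by rewrite !modn2 => /(congr1 odd); rewrite !oddb oddM andbb => ->.
have := odd_double_half a; rewrite a_odd -muln2; move: a./2 => j Ea.
rewrite -Ea in a_lt sq *.
have dvd_j : 2 * r %| j * j.+1.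
  move/eqP: sq; rewrite eqn_mod_dvd; last by nia.
  have -> : (1 + j * 2) * (1 + j * 2) - 1 = 4 * (j * j.+1) by nia.
  by rewrite (_ : 8 * r = 4 * (2 * r)) ?dvdn_pmul2l //; lia.
case: (boolP (odd j)) => j_odd.
  move: dvd_j; rewrite Gauss_dvdr ?(coprime_2pow 0) // => /dvdnP [t Et].
  have : t * (2 * r) <= 2 * (2 * r) by rewrite -Et; lia.
  rewrite leq_pmul2r ?muln_gt0 //.
  case: t Et => [|[|[|t]]] Et _ //; [apply: Or42 | apply: Or44]; lia.
move: dvd_j; rewrite Gauss_dvdl ?(coprime_2pow 0) // => /dvdnP [t Et].
have : t * (2 * r) < 2 * (2 * r) by rewrite -Et; lia.
rewrite ltn_pmul2r ?muln_gt0 //.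
case: t Et => [|[|t]] Et _ //; [apply: Or41 | apply: Or43]; lia.
Qed.

(* If (a + 1) = 2u with u odd, then (a + 1) b = 0 forces b = 0 or b = 4r. *)
Lemma dvd_2odd_8pow2 u b : odd u -> b < m -> m %| 2 * u * b -> b = 0 \/ b = 4 * r.
Proof.
move=> u_odd b_lt; rewrite -mulnA (_ : m = 2 * (4 * r)) ?dvdn_pmul2l //; last lia.
rewrite Gauss_dvdr ?(coprime_2pow 1) // => /dvdnP [t Et].
have : t * (4 * r) < 2 * (4 * r) by rewrite -Et; lia.
rewrite ltn_pmul2r ?muln_gt0 //.
by case: t Et => [|[|t]] Et _ //; lia.
Qed.

Lemma invol_cond_8pow2 a b : a < m -> b < m -> invol_cond m a b ->
  [\/ a = 1 /\ (b = 0 \/ b = 4 * r), a = m.-1, a = (4 * r).-1 /\ ~~ odd b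
    | a = (4 * r).+1 /\ (b = 0 \/ b = 4 * r)].
Proof.
move=> a_lt b_lt /andP [/eqP sq]; rewrite mod0n => dvd_b.
have {}dvd_b : m %| a * b + b := dvd_b.
case: (sqrt1_8pow2 a_lt sq) dvd_b => -> dvd_b;
  [apply: Or41 | apply: Or43 | apply: Or44 | exact: Or42].
- split=> //; apply: (dvd_2odd_8pow2 (u := 1)) => //.
  by rewrite (_ : 2 * 1 * b = 1 * b + b) //; lia.
- split=> //; rewrite -dvdn2; move: dvd_b.
  rewrite (_ : (4 * r).-1 * b + b = 4 * r * b); last by have := r_gt0; nia.
  by rewrite (_ : m = 4 * r * 2) ?dvdn_pmul2l ?muln_gt0 ?expn_gt0 //; lia.
- split=> //; apply: (dvd_2odd_8pow2 (u := (2 * r).+1)) => //; first by rewrite /= oddM.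
  by rewrite (_ : 2 * (2 * r).+1 * b = (4 * r).+1 * b + b) //; nia.
Qed.

Lemma inv_classes_8pow2 :
  inv_classes m = [set cls 1 0; cls 1 (4 * r); cls m.-1 0; cls m.-1 1;
                       cls (4 * r).-1 0; cls (4 * r).+1 0].
Proof.
have i1 : invol_cond m 1 0 by apply: (invol_cond_witness (t := 0) (u := 0)); nia.
have i2 : invol_cond m 1 (4 * r) by apply: (invol_cond_witness (t := 0) (u := 1)); nia.
have i3 : invol_cond m m.-1 0 by apply: (invol_cond_witness (t := m - 2) (u := 0)); nia.
have i4 : invol_cond m m.-1 1 by apply: (invol_cond_witness (t := m - 2) (u := 1)); nia.
have i5 : invol_cond m (4 * r).-1 0.
  by apply: (invol_cond_witness (t := 2 * r - 1) (u := 0)); nia.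
have i6 : invol_cond m (4 * r).+1 0.
  by apply: (invol_cond_witness (t := 2 * r + 1) (u := 0)); nia.
apply/setP => C; rewrite !inE; apply/idP/idP; last first.
  by case/orP => [/orP [/orP [/orP [/orP [|]|]|]|]|] /eqP ->;
    apply: lam_class_in; rewrite ?coprime1n.
case/(inv_classesP m_gt0) => a [b [_ q ->]].
case: (invol_cond_8pow2 (ltn_ord a) (ltn_ord b) q)
  => [[-> [->|->]] | -> | [-> b_even] | [-> [->|->]]].
- by rewrite eqxx.
- by rewrite eqxx !orbT.
- by rewrite reflection_class; [case: (odd b); rewrite eqxx !orbT | lia].
- rewrite (lam_class_shift (b := 0) (d := (2 * r).+1 * b./2)) ?eqxx ?orbT //; first lia.
  apply: (eq_modn_mul (t := r * b./2)); have := odd_double_half b.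
  by rewrite (negbTE b_even) add0n -muln2 => {1}<-; nia.
- by rewrite eqxx !orbT.
- rewrite (lam_class_shift (b := 0) (d := 1)) ?eqxx ?orbT //.
  by apply: (eq_modn_mul (t := 1)); lia.
Qed.

Lemma card_inv_classes_8pow2 : #|inv_classes m| = 6.
Proof.
rewrite inv_classes_8pow2; apply: cards6; rewrite eq_sym;
  [ apply: lam_class_neq_transl | apply: lam_class_neq_mult | apply: lam_class_neq_mult
  | apply: lam_class_neq_mult | apply: lam_class_neq_mult | apply: lam_class_neq_refl
  | apply: lam_class_neq_mult ..];
  by rewrite ?coprime1n ?unit_m1 ?unit_h1 ?unit_h2 ?oddM //; lia.
Qed.

End TwoPowers.

Lemma inv_classes_2pow k : 3 <= k ->
  inv_classes (2 ^ k) =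
    [set (lam (2 ^ k) 1 0 ^: Hol (2 ^ k))%g;
         (lam (2 ^ k) 1 (2 ^ k.-1) ^: Hol (2 ^ k))%g;
         (lam (2 ^ k) (2 ^ k).-1 0 ^: Hol (2 ^ k))%g;
         (lam (2 ^ k) (2 ^ k).-1 1 ^: Hol (2 ^ k))%g;
         (lam (2 ^ k) (2 ^ k.-1).-1 0 ^: Hol (2 ^ k))%g;
         (lam (2 ^ k) (2 ^ k.-1).+1 0 ^: Hol (2 ^ k))%g]
  /\ #|inv_classes (2 ^ k)| = 6.
Proof.
move=> k_ge3; have -> : k = (k - 3).+3 by lia.
rewrite -[(k - 3).+3.-1]/((k - 3).+2) !expnS !mulnA.
exact: (conj (inv_classes_8pow2 (k - 3)) (card_inv_classes_8pow2 (k - 3))).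
Qed.

Lemma inv_classes_2 :
  inv_classes 2 = [set (lam 2 1 0 ^: Hol 2)%g; (lam 2 1 1 ^: Hol 2)%g]
  /\ #|inv_classes 2| = 2.
Proof.
have -> : inv_classes 2 = [set (lam 2 1 0 ^: Hol 2)%g; (lam 2 1 1 ^: Hol 2)%g].
  apply/setP => C; rewrite !inE; apply/idP/idP; last first.
    by case/orP => /eqP ->; apply: lam_class_in.
  case/inv_classesP => // a [b [ca _ ->]].
  by case: a ca => [[|[|a]]] //= a_lt _; case: b => [[|[|b]]] //= b_lt; rewrite eqxx ?orbT.
by rewrite cards2 lam_class_neq_transl.
Qed.

Lemma inv_classes_4 :
  inv_classes 4 = [set (lam 4 1 0 ^: Hol 4)%g; (lam 4 1 2 ^: Hol 4)%g;
                       (lam 4 3 0 ^: Hol 4)%g; (lam 4 3 1 ^: Hol 4)%g]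
  /\ #|inv_classes 4| = 4.
Proof.
have -> : inv_classes 4 = [set (lam 4 1 0 ^: Hol 4)%g; (lam 4 1 2 ^: Hol 4)%g;
                               (lam 4 3 0 ^: Hol 4)%g; (lam 4 3 1 ^: Hol 4)%g].
  apply/setP => C; rewrite !inE; apply/idP/idP; last first.
    by case/orP => [/orP [/orP [|]|]|] /eqP ->; apply: lam_class_in.
  case/inv_classesP => // a [b [ca q ->]].
  case: a ca q => [[|[|[|[|a]]]]] //= a_lt _; case: b => [[|[|[|[|b]]]]] //= b_lt q;
    by rewrite ?eqxx ?orbT //= -[3]/(4.-1) reflection_class //= eqxx ?orbT.
split=> //; apply: cards4; rewrite eq_sym;
  [apply: lam_class_neq_transl | apply: lam_class_neq_mult ..
  | apply: (lam_class_neq_refl (m := 4))] => //.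
Qed.

Lemma card_inv_classes_pk p k : prime p -> 0 < k ->
  #|inv_classes (p ^ k)| = if p == 2 then two_factor k else 2.
Proof.
move=> p_pr k_gt0; case: eqP => [->|p_neq2]; last first.
  by case: (inv_classes_odd_pk p_pr _ k_gt0) => //; have := prime_gt1 p_pr; lia.
rewrite /two_factor; case: k k_gt0 => [|[|[|k]]] // _.
- by case: inv_classes_2.
- by case: inv_classes_4.
- by case: (inv_classes_2pow (isT : 3 <= k.+3)) => _ ->; rewrite (_ : minn 6 _ = 6) //; lia.
Qed.

Lemma card_inv_classes1 : #|inv_classes 1| = 1.
Proof.
rewrite card_inv_classes // /nclasses.
have -> : [set [set y in invol_pairs 1 | conj_rel 1 x y] | x in invol_pairs 1] =
          [set [set y in invol_pairs 1 | conj_rel 1 (ord0, ord0) y]].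
  apply/setP => S; rewrite inE; apply/imsetP/eqP.
    by move=> [[x y] _ ->]; rewrite (ord1 x) (ord1 y).
  by move=> ->; exists (ord0, ord0) => //; rewrite inE.
exact: cards1.
Qed.

Definition inv_count m := two_factor (logn 2 m) * 2 ^ size [seq q <- primes m | 2 < q].

Lemma primes_mul_pk m p k : prime p -> 0 < k -> 0 < m -> coprime p m ->
  perm_eq (primes (m * p ^ k)) (p :: primes m).
Proof.
move=> p_pr k_gt0 m_gt0 co; apply: uniq_perm; first exact: primes_uniq.
  by rewrite /= primes_uniq andbT mem_primes p_pr m_gt0 -prime_coprime.
move=> q; rewrite primesM ?expn_gt0 ?(prime_gt0 p_pr) // primesX // (primes_prime p_pr).
by rewrite !inE orbC.
Qed.

Lemma inv_count_mul_pk m p k : prime p -> 0 < k -> 0 < m -> coprime p m ->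
  inv_count (m * p ^ k) = inv_count m * (if p == 2 then two_factor k else 2).
Proof.
move=> p_pr k_gt0 m_gt0 co; rewrite /inv_count lognM ?expn_gt0 ?(prime_gt0 p_pr) //.
rewrite (perm_size (perm_filter _ (primes_mul_pk p_pr k_gt0 m_gt0 co))) /=.
case: eqP co => [-> co | /eqP p_neq2 _].
  by rewrite pfactorK // (logn_coprime co) add0n (_ : two_factor 0 = 1) // mul1n mulnC.
have p_gt2 : 2 < p by have := prime_gt1 p_pr; lia.
have co2 : coprime 2 (p ^ k).
  by rewrite coprime_pexpr // prime_coprime // dvdn_prime2 // eq_sym.
by rewrite (logn_coprime co2) addn0 p_gt2 expnS; ring.
Qed.

Lemma card_inv_classes_count m : 0 < m -> #|inv_classes m| = inv_count m.
Proof.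
elim/ltn_ind: m => m IH m_gt0; case: (ltngtP m 1) => [|m_gt1|->]; first lia; last first.
  by rewrite card_inv_classes1 /inv_count /two_factor logn1.
have p_pr := pdiv_prime m_gt1; set p := pdiv m in p_pr *.
have [m' co Em] := pfactor_coprime p_pr m_gt0; set k := logn p m in Em.
have k_gt0 : 0 < k by rewrite logn_gt0 mem_primes p_pr m_gt0 pdiv_dvd.
have pk_gt1 : 1 < p ^ k by rewrite -(exp1n k) ltn_exp2r // prime_gt1.
have m'_gt0 : 0 < m' by move: m_gt0; rewrite Em muln_gt0 => /andP [].
have m'_lt : m' < m by rewrite Em -{1}(muln1 m') ltn_mul2l m'_gt0.
clearbody p k; subst m.
rewrite inv_count_mul_pk // mulnC card_inv_classesM ?expn_gt0 ?(prime_gt0 p_pr) //;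
  last by rewrite coprime_pexpl.
by rewrite card_inv_classes_pk // IH // mulnC.
Qed.

Theorem lemma5p3 :
  (forall p k : nat, prime p -> 2 < p -> 0 < k ->
     inv_classes (p ^ k) =
       [set (lam (p ^ k) 1 0 ^: Hol (p ^ k))%g; (lam (p ^ k) (p ^ k).-1 0 ^: Hol (p ^ k))%g]
     /\ #|inv_classes (p ^ k)| = 2)
  /\
  (inv_classes 2 = [set (lam 2 1 0 ^: Hol 2)%g; (lam 2 1 1 ^: Hol 2)%g]
   /\ #|inv_classes 2| = 2)
  /\
  (inv_classes 4 = [set (lam 4 1 0 ^: Hol 4)%g; (lam 4 1 2 ^: Hol 4)%g;
                        (lam 4 3 0 ^: Hol 4)%g; (lam 4 3 1 ^: Hol 4)%g]
   /\ #|inv_classes 4| = 4)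
  /\
  (forall k : nat, 3 <= k ->
     inv_classes (2 ^ k) =
       [set (lam (2 ^ k) 1 0 ^: Hol (2 ^ k))%g;
            (lam (2 ^ k) 1 (2 ^ k.-1) ^: Hol (2 ^ k))%g;
            (lam (2 ^ k) (2 ^ k).-1 0 ^: Hol (2 ^ k))%g;
            (lam (2 ^ k) (2 ^ k).-1 1 ^: Hol (2 ^ k))%g;
            (lam (2 ^ k) (2 ^ k.-1).-1 0 ^: Hol (2 ^ k))%g;
            (lam (2 ^ k) (2 ^ k.-1).+1 0 ^: Hol (2 ^ k))%g]
     /\ #|inv_classes (2 ^ k)| = 6)
  /\
  (forall m : nat, 0 < m ->
     #|inv_classes m| =
       two_factor (logn 2 m) * 2 ^ size [seq q <- primes m | 2 < q]).
Proof.
split; first exact: inv_classes_odd_pk.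
split; first exact: inv_classes_2.
split; first exact: inv_classes_4.
split; first exact: inv_classes_2pow.
exact: card_inv_classes_count.
Qed.
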